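(* Let $n\ge0$ be an integer and $n_1=\lceil n/2\rceil$. If $g\in K a(\varpi^{n_1})$, then $t(g)=\min(n_1-2l(g),-n_1)$.
   Context: $F$ is a non-archimedean local field of characteristic $0$ with ring of integers $\mathfrak{o}$, maximal ideal $\mathfrak{p}$, uniformizer $\varpi$; $U_j=\{x\in\mathfrak{o}^\times: v(x-1)\ge j\}$. $G=\mathrm{GL}_2(F)$, $K=\mathrm{GL}_2(\mathfrak{o})$, $K_1(\mathfrak{p}^n)=K\cap\begin{pmatrix}1+\mathfrak{p}^n&\mathfrak{o}\\\mathfrak{p}^n&\mathfrak{o}\end{pmatrix}$, $w=\begin{pmatrix}0&1\\-1&0\end{pmatrix}$, $a(y)=\mathrm{diag}(y,1)$, $n(x)=\begin{pmatrix}1&x\\0&1\end{pmatrix}$, $Z$ the center, $N=\{n(x)\}$. There is a disjoint decomposition $G=\bigsqcup_{t\in\mathbb{Z}}\bigsqcup_{0\le l\le n}\bigsqcup_{v\in\mathfrak{o}^\times/U_{\min(l,n-l)}}ZN a(\varpi^t)wn(\varpi^{-l}v)K_1(\mathfrak{p}^n)$; for $g\in G$, $t(g)$ and $l(g)$ are the unique integers with $0\le l(g)\le n$ and $g\in ZNa(\varpi^{t(g)})wn(\varpi^{-l(g)}v)K_1(\mathfrak{p}^n)$ for some $v\in\mathfrak{o}^\times$. *)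

From HB Require Import structures.
From mathcomp Require Import all_boot all_order all_algebra.
Set Implicit Arguments. Unset Strict Implicit. Unset Printing Implicit Defensive.
Import Order.TTheory GRing.Theory Num.Theory.
Local Open Scope ring_scope.

Section Defs.
Variable F : fieldType.
(* v : F -> int is the normalized discrete valuation; its value at 0 is
   irrelevant (never used): "x in p^k" is encoded by [vge v x k]. *)
Variable v : F -> int.

Definition vge (x : F) (k : int) : Prop := x = 0 \/ k <= v x.
Definition in_o (x : F) : Prop := vge x 0.
Definition unit_o (x : F) : Prop := x != 0 /\ v x = 0.

Definition is_normalized_dval : Prop :=
  [/\ forall x y, x != 0 -> y != 0 -> v (x * y) = v x + v y,
      forall x y, x != 0 -> y != 0 -> x + y != 0 ->
        Num.min (v x) (v y) <= v (x + y)
    & exists pi : F, pi != 0 /\ v pi = 1].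

Definition v_complete : Prop :=
  forall u : nat -> F,
    (forall k : int, exists N, forall m p, (N <= m)%N -> (N <= p)%N ->
        vge (u m - u p) k) ->
    exists L, forall k : int, exists N, forall m, (N <= m)%N -> vge (u m - L) k.

Definition finite_residue_field : Prop :=
  exists s : seq F, forall x, in_o x -> exists2 y, y \in s & vge (x - y) 1.

Definition nonarch_local_field_char0 : Prop :=
  [/\ is_normalized_dval, v_complete, finite_residue_field
    & [pchar F] =i pred0].

Definition mx2 (a b c d : F) : 'M[F]_2 :=
  \matrix_(i < 2, j < 2)
    if i == 0 :> nat then (if j == 0 :> nat then a else b)
    else (if j == 0 :> nat then c else d).

Definition wmx : 'M[F]_2 := mx2 0 1 (-1) 0.
Definition amx (y : F) : 'M[F]_2 := mx2 y 0 0 1.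
Definition nmx (x : F) : 'M[F]_2 := mx2 1 x 0 1.

Definition inK (k : 'M[F]_2) : Prop :=
  [/\ forall i j, in_o (k i j) & unit_o (\det k)].

Definition inK1 (n : nat) (k : 'M[F]_2) : Prop :=
  [/\ inK k, vge (k 0 0 - 1) (Posz n) & vge (k 1 0) (Posz n)].

Definition in_cell (pi : F) (n : nat) (t : int) (l : nat) (g : 'M[F]_2) : Prop :=
  exists z x u k, [/\ z != 0, unit_o u, inK1 n k &
    g = z%:M *m nmx x *m amx (pi ^ t) *m wmx *m nmx (pi ^ (- l%:Z) * u) *m k].

End Defs.

From mathcomp Require Import all_boot all_order all_algebra.
From mathcomp Require Import zify ring.
Import Order.TTheory GRing.Theory Num.Theory.
Local Open Scope ring_scope.
Set Implicit Arguments. Unset Strict Implicit.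

(* Compare bottom rows.  On one side the bottom row of g a(pi^-n1) is that of
   k, hence primitive.  On the other it is -z times the row (1, c) k1 a(pi^-n1),
   with c = pi^-l u; since k1 in K1(p^n) has unit diagonal entries when n > 0,
   the minimal valuation of that row is -max(n1, l).  Hence v z = max(n1, l),
   and comparing valuations of determinants gives 2 v z + t = n1. *)

Section Mx2.
Variable F : fieldType.
Implicit Types (a b c d s x z : F) (k M : 'M[F]_2).

Lemma mx2_eta k : k = mx2 (k 0 0) (k 0 1) (k 1 0) (k 1 1).
Proof.
by apply/matrixP => i j; rewrite !mxE;
  case: i => [[|[|i]] Hi] //; case: j => [[|[|j]] Hj] //=; congr (k _ _); apply: val_inj.
Qed.

Lemma scalar_mx2 z : z%:M = mx2 z 0 0 z.
Proof.
by apply/matrixP => i j; rewrite !mxE; case: i => [[|[|i]] Hi] //; case: j => [[|[|j]] Hj].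
Qed.

Lemma mul_mx2 a b c d a' b' c' d' :
  mx2 a b c d *m mx2 a' b' c' d' =
  mx2 (a * a' + b * c') (a * b' + b * d') (c * a' + d * c') (c * b' + d * d').
Proof.
apply/matrixP => i j; rewrite !mxE !big_ord_recr big_ord0 /= !mxE /=.
by case: i => [[|[|i]] Hi] //; case: j => [[|[|j]] Hj] //=; rewrite add0r.
Qed.

Lemma det_mx2 a b c d : \det (mx2 a b c d) = a * d - b * c.
Proof.
rewrite (expand_det_row _ 0) !big_ord_recr big_ord0 /= /cofactor !det_mx11 !mxE /=.
by rewrite add0r expr0 expr1 mul1r mulN1r mulrN.
Qed.

Lemma mulmx2E k M i j : (k *m M) i j = k i 0 * M 0 j + k i 1 * M 1 j.
Proof.
rewrite mxE !big_ord_recl big_ord0 addr0.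
by congr (k i _ * M _ j + k i _ * M _ j); apply: val_inj.
Qed.

Lemma mulmx_amx_col0 k s i : (k *m amx s) i 0 = k i 0 * s.
Proof. by rewrite mulmx2E !mxE /= mulr0 addr0. Qed.

Lemma mulmx_amx_col1 k s i : (k *m amx s) i 1 = k i 1.
Proof. by rewrite mulmx2E !mxE /= mulr0 add0r mulr1. Qed.

Lemma nmx_mul_row0 c k j : (nmx c *m k) 0 j = k 0 j + c * k 1 j.
Proof. by rewrite mulmx2E !mxE /= mul1r. Qed.

Lemma cell_row1 z x s M j :
  (z%:M *m nmx x *m amx s *m wmx F *m M) 1 j = - z * M 0 j.
Proof.
by rewrite mulmx2E /nmx /amx /wmx scalar_mx2 !mul_mx2 !mxE /=; ring.
Qed.

Lemma det_mulmx_amx k s : \det (k *m amx s) = \det k * s.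
Proof. by rewrite det_mulmx det_mx2 mulr1 mulr0 subr0. Qed.

Lemma det_cell z x s c k :
  \det (z%:M *m nmx x *m amx s *m wmx F *m (nmx c *m k)) = z * z * s * \det k.
Proof. by rewrite !det_mulmx /nmx /amx /wmx scalar_mx2 !det_mx2; ring. Qed.

End Mx2.

Section Valuation.
Variables (F : fieldType) (v : F -> int).
Hypothesis hv : is_normalized_dval v.
Implicit Types (x y lam : F) (m : int).

Definition vexact x m : Prop := x != 0 /\ v x = m.

Lemma vM x y : x != 0 -> y != 0 -> v (x * y) = v x + v y.
Proof. by case: hv => hM _ _; apply: hM. Qed.

Lemma v1 : v 1 = 0.
Proof. by have := vM (oner_neq0 F) (oner_neq0 F); rewrite mulr1 -{1}[v 1]addr0 => /addrI ->. Qed.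

Lemma vN x : x != 0 -> v (- x) = v x.
Proof.
move=> x0; have N10 : (-1 : F) != 0 by rewrite oppr_eq0 oner_neq0.
have := vM N10 N10; rewrite mulrNN mulr1 v1 => vN1.
by rewrite -mulN1r vM // (_ : v (-1) = 0) ?add0r //; lia.
Qed.

Lemma vexact1 : vexact 1 0.
Proof. by split; [apply: oner_neq0 | apply: v1]. Qed.

Lemma vexact_mul x y a b : vexact x a -> vexact y b -> vexact (x * y) (a + b).
Proof. by case=> x0 <- [y0 <-]; split; [rewrite mulf_neq0 | rewrite vM]. Qed.

Lemma vexact_opp x m : vexact x m -> vexact (- x) m.
Proof. by case=> x0 <-; split; [rewrite oppr_eq0 | rewrite vN]. Qed.

Lemma vexact_inv x m : vexact x m -> vexact x^-1 (- m).
Proof.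
case=> x0 <-; split; first by rewrite invr_neq0.
by have := vM x0 (invr_neq0 x0); rewrite mulfV // v1 => /esym/addr0_eq/esym.
Qed.

Lemma vexact_exp x m n : vexact x m -> vexact (x ^+ n) (m *+ n).
Proof.
move=> hx; elim: n => [|n IH]; first by rewrite expr0 mulr0n; apply: vexact1.
by rewrite exprS mulrS; apply: vexact_mul.
Qed.

Lemma vexact_unique x m m' : vexact x m -> vexact x m' -> m = m'.
Proof. by case=> _ <- [_ <-]. Qed.

Lemma vexact_vge x m : vexact x m -> vge v x m.
Proof. by case=> _ <-; right. Qed.

Lemma vexact_vge_le x m m' : vexact x m -> vge v x m' -> m' <= m.
Proof. by case=> /negPf x0 <- [/eqP|]; rewrite ?x0. Qed.

Lemma vge_le x m m' : vge v x m -> m' <= m -> vge v x m'.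
Proof. by case=> [->|h] hk; [left | right; apply: le_trans h]. Qed.

Lemma vge_opp x m : vge v x m -> vge v (- x) m.
Proof.
case=> [->|h]; first by rewrite oppr0; left.
have [->|x0] := eqVneq x 0; first by rewrite oppr0; left.
by right; rewrite vN.
Qed.

Lemma vge_add x y m : vge v x m -> vge v y m -> vge v (x + y) m.
Proof.
case: hv => _ hD _.
have [->|x0] := eqVneq x 0; first by rewrite add0r.
have [->|y0] := eqVneq y 0; first by rewrite addr0.
have [->|s0] := eqVneq (x + y) 0; first by left.
case=> [/eqP|hx]; first by rewrite (negPf x0).
case=> [/eqP|hy]; first by rewrite (negPf y0).
by right; apply: le_trans (hD _ _ x0 y0 s0); rewrite le_min hx hy.
Qed.

Lemma vge_mul x y a b : vge v x a -> vge v y b -> vge v (x * y) (a + b).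
Proof.
have [->|x0] := eqVneq x 0; first by rewrite mul0r; left.
have [->|y0] := eqVneq y 0; first by rewrite mulr0; left.
case=> [/eqP|hx]; first by rewrite (negPf x0).
case=> [/eqP|hy]; first by rewrite (negPf y0).
by right; rewrite vM // lerD.
Qed.

Lemma vge_split x m : vge v x m -> vexact x m \/ vge v x (m + 1).
Proof.
have [->|x0] := eqVneq x 0; first by right; left.
case=> [/eqP|hx]; first by rewrite (negPf x0).
have [e|ne] := eqVneq (v x) m; first by left.
by right; right; lia.
Qed.

Lemma vexact_addl x y m : vge v x (m + 1) -> vexact y m -> vexact (x + y) m.
Proof.
move=> hx hy; have hxm : vge v x m by apply: vge_le hx _; lia.
case: (vge_split (vge_add hxm (vexact_vge hy))) => // hs.
by have := vge_add hs (vge_opp hx); rewrite addrC addKr => /(vexact_vge_le hy); lia.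
Qed.

Definition row_val x y m : Prop :=
  [/\ vge v x m, vge v y m & vexact x m \/ vexact y m].

Lemma row_val_exactl x y m : vexact x m -> vge v y m -> row_val x y m.
Proof. by move=> hx hy; split; [apply: vexact_vge | | left]. Qed.

Lemma row_val_exactr x y m : vge v x m -> vexact y m -> row_val x y m.
Proof. by move=> hx hy; split; [| apply: vexact_vge | right]. Qed.

Lemma row_val_unique x y m m' : row_val x y m -> row_val x y m' -> m = m'.
Proof.
have le a b : row_val x y a -> row_val x y b -> b <= a.
  by case=> _ _ [e|e] [hx hy _]; [apply: vexact_vge_le e hx | apply: vexact_vge_le e hy].
by move=> hm hm'; apply: le_anti; rewrite !(le _ _ hm hm', le _ _ hm' hm).
Qed.

Lemma row_val_scale lam x y a m :
  vexact lam a -> row_val x y m -> row_val (lam * x) (lam * y) (a + m).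
Proof.
move=> hl [hx hy hxy]; split; try exact: vge_mul (vexact_vge hl) _.
by case: hxy => h; [left | right]; apply: vexact_mul.
Qed.

Lemma inK_row_val (k : 'M[F]_2) i : inK v k -> row_val (k i 0) (k i 1) 0.
Proof.
case=> kO kU.
have [e|h0] := vge_split (kO i 0); first exact: row_val_exactl e (kO i 1).
have [e|h1] := vge_split (kO i 1); first exact: row_val_exactr (kO i 0) e.
suff : vge v (\det k) 1 by move/(vexact_vge_le kU).
have vge1M a b : vge v a 1 -> in_o v b -> vge v (a * b) 1.
  by move=> ha hb; apply: vge_le (vge_mul ha hb) _.
rewrite [k in \det k]mx2_eta det_mx2.
have [ei|ei] : i = 0 \/ i = 1.
  by case: (i) => [[|[|//]] ?]; [left | right]; apply: val_inj.
  by rewrite ei in h0 h1; apply: vge_add (vge_opp _); apply: vge1M.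
rewrite ei in h0 h1; rewrite [k 0 0 * _]mulrC [k 0 1 * _]mulrC.
by apply: vge_add (vge_opp _); apply: vge1M.
Qed.

Lemma inK_mul (a b : 'M[F]_2) : inK v a -> inK v b -> inK v (a *m b).
Proof.
case=> aO aU [bO bU]; split; last by rewrite det_mulmx; apply: vexact_mul aU bU.
by move=> i j; rewrite mulmx2E; apply: vge_add; exact: vge_mul (aO _ _) (bO _ _).
Qed.

Lemma inK_nmx c : in_o v c -> inK v (nmx c).
Proof.
move=> hc; split; last by rewrite det_mx2 mulr1 mulr0 subr0; apply: vexact1.
have o1 : in_o v (1 : F) by apply: vexact_vge vexact1.
by move=> i j; rewrite !mxE; case: ifP => _; case: ifP => _ //; left.
Qed.

Lemma inK1_unit00 n (k : 'M[F]_2) : (0 < n)%N -> inK1 v n k -> unit_o v (k 0 0).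
Proof.
move=> n0 [_ h00 _]; rewrite -(subrK 1 (k 0 0)).
by apply: vexact_addl vexact1; apply: vge_le h00 _; lia.
Qed.

Lemma inK1_unit11 n (k : 'M[F]_2) : (0 < n)%N -> inK1 v n k -> unit_o v (k 1 1).
Proof.
move=> n0 [kK _ h10]; case: (inK_row_val 1 kK) => _ _ [e|//].
by have := vexact_vge_le e (vge_le h10 (_ : 1 <= n%:Z)); lia.
Qed.

End Valuation.

Section Uniformizer.
Variables (F : fieldType) (v : F -> int) (pi : F).
Hypotheses (hv : is_normalized_dval v) (hpi : vexact v pi 1).

Lemma vexact_pi m : vexact v (pi ^ m) m.
Proof.
case: m => m; first by have := vexact_exp hv m hpi; rewrite natz.
by have := vexact_inv hv (vexact_exp hv m.+1 hpi); rewrite natz -NegzE.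
Qed.

Lemma inK1_row_val n l (N1 : int) u (k : 'M[F]_2) :
  (l <= n)%N -> 0 <= N1 <= n%:Z -> unit_o v u -> inK1 v n k ->
  let R := nmx (pi ^ (- l%:Z) * u) *m k in
  row_val v (pi ^ (- N1) * R 0 0) (R 0 1) (- Num.max N1 l%:Z).
Proof.
move=> hl hN1 hu hk R; rewrite /R !nmx_mul_row0.
have := vexact_mul hv (vexact_pi (- l%:Z)) hu; rewrite addr0.
set c := pi ^ (- l%:Z) * u => hc.
case: (hk) => hkK h00 h10; case: (hkK) => kO _.
have [n0|npos] := posnP n.
  have -> : N1 = 0 by lia.
  have l0 : l = 0%N by lia.
  rewrite l0 (_ : Num.max 0 0 = 0) // expr0z mul1r.
  have cO : in_o v c by apply: vexact_vge; rewrite l0 in hc.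
  by have := inK_row_val hv 0 (inK_mul hv (inK_nmx hv cO) hkK); rewrite !nmx_mul_row0.
have u00 := inK1_unit00 hv npos hk.
have u11 := inK1_unit11 hv npos hk.
have cK10 : vge v (c * k 1 0) (- l%:Z + n%:Z) := vge_mul hv (vexact_vge hc) h10.
have := vexact_mul hv hc u11; rewrite addr0 => cK11.
have hQ : vge v (k 0 1 + c * k 1 1) (- l%:Z).
  by apply: (vge_add hv _ (vexact_vge cK11)); apply: (vge_le (kO 0 1) _); lia.
have hQ' : (0 < l)%N -> vexact v (k 0 1 + c * k 1 1) (- l%:Z).
  by move=> l0; apply: (vexact_addl hv _ cK11); apply: (vge_le (kO 0 1) _); lia.
have [ln|ln] : (l < n)%N \/ l = n by lia.
  have hP : unit_o v (k 0 0 + c * k 1 0).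
    by rewrite addrC; apply: (vexact_addl hv _ u00); apply: (vge_le cK10 _); lia.
  have := vexact_mul hv (vexact_pi (- N1)) hP; rewrite addr0 => hP'.
  have [lN|Nl] := lerP (l%:Z) N1.
    by apply: (row_val_exactl hP' _); apply: (vge_le hQ _); lia.
  apply: row_val_exactr; last by apply: hQ'; lia.
  by apply: (vge_le (vexact_vge hP') _); lia.
have hP : vge v (k 0 0 + c * k 1 0) 0.
  by apply: (vge_add hv (kO 0 0) _); apply: (vge_le cK10 _); lia.
have hP' := vge_mul hv (vexact_vge (vexact_pi (- N1))) hP.
rewrite max_r; last lia.
by apply: row_val_exactr; [apply: (vge_le hP' _) | apply: hQ']; lia.
Qed.

End Uniformizer.

Unset Implicit Arguments.

Theorem lemma2p3 (F : fieldType) (v : F -> int)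
  (hF : nonarch_local_field_char0 v)
  (pi : F) (hpi0 : pi != 0) (hpi : v pi = 1)
  (n : nat) (g : 'M[F]_2)
  (hg : exists k, inK v k /\ g = k *m amx (pi ^ (uphalf n)%:Z))
  (t : int) (l : nat) (hl : (l <= n)%N) (hcell : in_cell v pi n t l g) :
  t = Num.min ((uphalf n)%:Z - 2 * l%:Z) (- (uphalf n)%:Z).
Proof.
case: hF => hv _ _ _; have hpi1 : vexact v pi 1 := conj hpi0 hpi.
case: hg => k [hk gE]; case: hcell => z [x [u [k1 [z0 hu hk1 gE']]]].
set N1 := (uphalf n)%:Z in gE *.
set R := nmx (pi ^ (- l%:Z) * u) *m k1.
have hz : vexact v (- z) (v z) := vexact_opp hv (conj z0 erefl).
have gR j : g 1 j = - z * R 0 j by rewrite gE' -mulmxA cell_row1.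
have hrow : row_val v (k 1 0) (k 1 1) (v z - Num.max N1 l%:Z).
  have -> : k 1 0 = - z * (pi ^ (- N1) * R 0 0).
    by rewrite mulrCA -gR gE mulmx_amx_col0 -invr_expz mulrC mulfK // expfz_neq0.
  have -> : k 1 1 = - z * R 0 1 by rewrite -gR gE mulmx_amx_col1.
  by apply: (row_val_scale hv hz (inK1_row_val hv hpi1 hl _ hu hk1)); rewrite /N1; lia.
have vz : v z - Num.max N1 l%:Z = 0 := row_val_unique hrow (inK_row_val hv 1 hk).
have vdet : 0 + N1 = v z + v z + t + 0.
  have hdet : \det g = \det k * pi ^ N1 by rewrite gE det_mulmx_amx.
  have [_ kU] := hk; have [[_ k1U] _ _] := hk1.
  rewrite gE' -mulmxA det_cell in hdet.
  apply: (vexact_unique (vexact_mul hv kU (vexact_pi hv hpi1 N1))); rewrite -hdet.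
  apply: (vexact_mul hv _ k1U); apply: (vexact_mul hv _ (vexact_pi hv hpi1 t)).
  by have := vexact_mul hv hz hz; rewrite mulrNN.
lia.
Qed.
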